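(* Let $\alpha \in [0,1)$. For every $k \in \{0,\dots,m-1\}$, with $\mathbf{S}_k = (S_k,\dots,S_k)$, $$B_{T_\ell}^*(\mathbf{S}_k) = S_{\min}\left(1 - \sqrt[n]{\alpha}\right) + S_k \sqrt[n]{\alpha}.$$
   Context: Fix integers $m \ge 2$, $n \ge 1$ and reals $S_{\min} < S_{\max}$; $S = \{S_0,\dots,S_{m-1}\}$ with $S_k = S_{\min} + k\frac{S_{\max}-S_{\min}}{m-1}$. $\mathcal{F}$ is the set of probability distributions on $S$, identified with the probability simplex in $\mathbb{R}^m$ with the Euclidean topology; $E[F]$ is the mean. $\Omega$ is the set of samples of size $n$ from $S$, identified with their sorted versions $x_{(1)} \le \dots \le x_{(n)}$. $P_F[\Omega']$ is the probability that the sorted sample of $n$ i.i.d. draws from $F$ lies in $\Omega' \subseteq \Omega$; $\mathcal{G}(\Omega',\alpha) = \{F : P_F[\Omega'] > \alpha\}$ and $\mathcal{F}(\Omega',\alpha)$ is its closure. The low lexicographic order $T_\ell$: $\mathbf{x} \le_{T_\ell} \mathbf{y}$ iff $\mathbf{x}=\mathbf{y}$ or at the smallest index $j$ with $x_{(j)} \ne y_{(j)}$ we have $x_{(j)} < y_{(j)}$. $\Omega(\mathbf{x},T_\ell) = \{\mathbf{y} : \mathbf{x} \le_{T_\ell} \mathbf{y}\}$ and $B_{T_\ell}^*(\mathbf{x}) = \min\{E[F] : F \in \mathcal{F}(\Omega(\mathbf{x},T_\ell),\alpha)\}$. *)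

From HB Require Import structures.
From mathcomp Require Import all_boot all_order all_algebra.
From mathcomp Require Import all_classical all_reals all_analysis.
Unset Implicit Arguments. Unset Printing Implicit Defensive.
Import Order.TTheory GRing.Theory Num.Theory.
Import numFieldNormedType.Exports.
Local Open Scope classical_set_scope.
Local Open Scope ring_scope.

Section Defs.
Variable R : realType.

Definition Sgrid (m : nat) (Smin Smax : R) (k : nat) : R :=
  Smin + k%:R * ((Smax - Smin) / (m.-1)%:R).

(* Distributions on S, identified with the probability simplex in R^m
   (row vectors 'rV[R]_m with their canonical normed topology). *)
Definition simplex (m : nat) : set 'rV[R]_m :=
  [set p | (forall i, 0 <= p ord0 i) /\ \sum_(i < m) p ord0 i = 1].

Definition mean (m : nat) (Smin Smax : R) (p : 'rV[R]_m) : R :=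
  \sum_(i < m) p ord0 i * Sgrid m Smin Smax i.

Definition sorted_sample (m n : nat) (Smin Smax : R) (t : {ffun 'I_n -> 'I_m})
  : seq R := sort <=%R [seq Sgrid m Smin Smax (t j) | j <- enum 'I_n].

(* P_F[Omega']: probability that the sorted sample of n i.i.d. draws
   from F lies in Omega' (a set of sorted samples, given as a predicate). *)
Definition probF (m n : nat) (Smin Smax : R) (p : 'rV[R]_m)
  (Om : pred (seq R)) : R :=
  \sum_(t : {ffun 'I_n -> 'I_m} | Om (sorted_sample m n Smin Smax t))
     \prod_(j < n) p ord0 (t j).

Definition Gset (m n : nat) (Smin Smax : R) (Om : pred (seq R)) (alpha : R)
  : set 'rV[R]_m :=
  [set p | simplex m p /\ alpha < probF m n Smin Smax p Om].

Definition Fset (m n : nat) (Smin Smax : R) (Om : pred (seq R)) (alpha : R)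
  : set 'rV[R]_m := closure (Gset m n Smin Smax Om alpha).

Fixpoint lexle (x y : seq R) : bool :=
  match x, y with
  | a :: x', b :: y' => (a < b) || ((a == b) && lexle x' y')
  | _, _ => true
  end.

Definition Omega_lex (x : seq R) : pred (seq R) :=
  fun y => lexle x y.

Definition is_min (A : set R) (v : R) : Prop :=
  A v /\ forall a, A a -> v <= a.

Definition Bstar_is (m n : nat) (Smin Smax alpha : R)
  (x : seq R) (v : R) : Prop :=
  is_min [set mean m Smin Smax p | p in Fset m n Smin Smax (Omega_lex x) alpha] v.

End Defs.
Arguments lexle {R}.
Arguments Omega_lex {R}.
Arguments is_min {R}.
Arguments Sgrid {R}.
Arguments simplex {R}.
Arguments mean {R}.
Arguments sorted_sample {R}.
Arguments probF {R}.
Arguments Gset {R}.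
Arguments Fset {R}.
Arguments Bstar_is {R}.

From HB Require Import structures.
From mathcomp Require Import all_boot all_order all_algebra.
From mathcomp Require Import all_classical all_reals all_analysis.
From mathcomp Require Import ring.
Import Order.TTheory GRing.Theory Num.Theory.
Import numFieldNormedType.Exports.
Local Open Scope classical_set_scope.
Local Open Scope ring_scope.

(* Write a = alpha^(1/n) and let q(F) be the mass F puts on {S_k, ..., S_(m-1)}.
   A sorted sample is lexicographically above (S_k, ..., S_k) iff all its
   entries are >= S_k, so P_F[Omega(S_k, T_l)] = q(F)^n and G is the set of
   distributions with q(F) > a.  Its closure lies in {q(F) >= a}, where
   E[F] >= S_min (1 - q(F)) + S_k q(F) >= S_min (1 - a) + S_k a; the bound is
   attained by (1 - a) delta_(S_min) + a delta_(S_k), the limit of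
   (1 - t) delta_(S_min) + t delta_(S_k) as t decreases to a. *)

Lemma lexle_nseq {R : realType} (s : R) (ys : seq R) :
  sorted <=%R ys -> lexle (nseq (size ys) s) ys = all (fun y => s <= y) ys.
Proof.
elim: ys => [|y ys IH] //= ys_sorted.
rewrite (IH (path_sorted ys_sorted)).
have y_le_ys : all (fun z => y <= z) ys := order_path_min le_trans ys_sorted.
case: (ltgtP s y) => [s_lt_y|//|->]; last by rewrite orFb !andTb.
rewrite orTb andTb; apply/esym/allP => z /(allP y_le_ys).
exact: le_trans (ltW s_lt_y).
Qed.

Lemma closure_at_right {R : realType} {T : topologicalType}
    (f : R -> T) (A : set T) {a b : R} :
  a < b -> {for a, continuous f} -> (forall t, a < t <= b -> A (f t)) ->
  closure A (f a).
Proof.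
move=> a_lt_b fa_cont fA.
apply: (@closed_cvg _ _ a^'+ _ f _ (@closed_closure _ A)); last first.
  exact: cvg_within_filter.
near=> t; apply: subset_closure; apply: fA; apply/andP; split.
- by near: t; exact: nbhs_right_gt.
- by near: t; exact: nbhs_right_le.
Unshelve. all: by end_near.
Qed.

Lemma continuous_row_sum {R : realType} (m : nat) (P : pred 'I_m) :
  continuous (fun p : 'rV[R]_m => \sum_(i < m | P i) p ord0 i).
Proof.
apply: (continuous_big (op := +%R)); first exact: add_continuous.
by move=> i _; exact: coord_continuous.
Qed.

Lemma closed_simplex {R : realType} (m : nat) : closed (@simplex R m).
Proof.
have -> : simplex m =
    \bigcap_(i in [set: 'I_m]) (fun p : 'rV[R]_m => p ord0 i) @^-1` [set x | 0 <= x]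
    `&` (fun p : 'rV[R]_m => \sum_(i < m) p ord0 i) @^-1` [set x | x = 1].
  apply/seteqP; split=> p [p_ge0 p_sum]; split=> // i.
  - by move=> _; exact: p_ge0.
  - exact: p_ge0.
apply: closedI; first apply: closed_bigI => i _.
- by apply: preimage_closed; [move=> ? _; exact: coord_continuous | exact: closed_ge].
- by apply: preimage_closed; [move=> ? _; exact: continuous_row_sum | exact: closed_eq].
Qed.

Lemma sum_indicator {R : realType} (m : nat) (i : 'I_m) (F : 'I_m -> R) :
  \sum_(l < m) (l == i)%:R * F l = F i.
Proof.
rewrite (bigD1 i) //= eqxx mul1r big1 ?addr0 // => l /negbTE ->.
by rewrite mul0r.
Qed.

Section GridDistributions.
Context {R : realType} {m : nat} {Smin Smax : R}.
Hypotheses (hm : (2 <= m)%N) (hS : Smin < Smax).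

Lemma Sgrid_le (i j : nat) :
  (Sgrid m Smin Smax i <= Sgrid m Smin Smax j) = (i <= j)%N.
Proof.
rewrite /Sgrid lerD2l ler_pM2r ?ler_nat // divr_gt0 ?subr_gt0 //.
by rewrite ltr0n; case: m hm => [|[|]].
Qed.

Lemma Smin_le_Sgrid (i : nat) : Smin <= Sgrid m Smin Smax i.
Proof. by have := Sgrid_le 0 i; rewrite leq0n /Sgrid mul0r addr0. Qed.

Definition upper_mass (k : 'I_m) (p : 'rV[R]_m) : R :=
  \sum_(i < m | (k <= i)%N) p ord0 i.

Lemma probF_Omega_lex_nseq (n : nat) (k : 'I_m) (p : 'rV[R]_m) :
  probF m n Smin Smax p (Omega_lex (nseq n (Sgrid m Smin Smax k))) =
  upper_mass k p ^+ n.
Proof.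
rewrite -[n in _ ^+ n]card_ord -prodr_const /upper_mass.
rewrite (bigA_distr_big (fun i : 'I_m => (k <= i)%N) (fun _ i => p ord0 i)).
apply: eq_bigl => t.
have size_t : size (sorted_sample m n Smin Smax t) = n.
  by rewrite size_sort size_map size_enum_ord.
rewrite /Omega_lex -{1}size_t lexle_nseq; last exact/sort_sorted/le_total.
rewrite all_sort all_map; apply/allP/ffun_onP => [t_ge j | t_ge j _].
- by have := t_ge j (mem_enum _ j); rewrite /= Sgrid_le.
- by rewrite /= Sgrid_le //; exact: t_ge.
Qed.

Lemma Gset_Omega_lex_nseq (n : nat) (k : 'I_m) (a : R) :
  (0 < n)%N -> 0 <= a ->
  Gset m n Smin Smax (Omega_lex (nseq n (Sgrid m Smin Smax k))) (a ^+ n) =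
  [set p | simplex m p /\ a < upper_mass k p].
Proof.
move=> n_gt0 a_ge0; rewrite /Gset; apply/seteqP; split=> p /= [p_simplex];
  rewrite probF_Omega_lex_nseq ltr_pXn2r ?nnegrE //.
all: by apply: sumr_ge0 => i _; case: p_simplex.
Qed.

Lemma Fset_Omega_lex_nseq_sub (n : nat) (k : 'I_m) (a : R) :
  (0 < n)%N -> 0 <= a ->
  Fset m n Smin Smax (Omega_lex (nseq n (Sgrid m Smin Smax k))) (a ^+ n)
  `<=` [set p | simplex m p /\ a <= upper_mass k p].
Proof.
move=> n_gt0 a_ge0; rewrite /Fset Gset_Omega_lex_nseq //.
have mass_closed : closed [set p | simplex m p /\ a <= upper_mass k p].
  apply: closedI; first exact: closed_simplex.
  apply: (@preimage_closed _ _ (upper_mass k) [set x | a <= x]).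
  - by move=> p _; exact: (@continuous_row_sum R m (fun i : 'I_m => (k <= i)%N)).
  - exact: closed_ge.
move/closure_id: mass_closed => ->.
by apply: closureS => p [p_simplex /ltW].
Qed.

Lemma mean_ge_upper_mass (k : 'I_m) (p : 'rV[R]_m) (a : R) :
  simplex m p -> a <= upper_mass k p ->
  Smin * (1 - a) + Sgrid m Smin Smax k * a <= mean m Smin Smax p.
Proof.
move=> [p_ge0 p_sum] a_le_q; set s := Sgrid m Smin Smax k.
have lower_mass : \sum_(i < m | ~~ (k <= i)%N) p ord0 i = 1 - upper_mass k p.
  by rewrite -p_sum [in RHS](bigID (fun i : 'I_m => (k <= i)%N)) /= addrAC subrr add0r.
apply: (@le_trans _ _ (Smin * (1 - upper_mass k p) + s * upper_mass k p)).
- rewrite -subr_ge0 (_ : _ - _ = (s - Smin) * (upper_mass k p - a)); last by ring.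
  by rewrite mulr_ge0 // subr_ge0 // Smin_le_Sgrid.
- rewrite /mean (bigID (fun i : 'I_m => (k <= i)%N)) /= addrC -lower_mass.
  apply: lerD; rewrite mulr_sumr; apply: ler_sum => i k_le_i;
    by rewrite mulrC ler_wpM2l ?Sgrid_le ?Smin_le_Sgrid.
Qed.

Definition two_point (i j : 'I_m) (t : R) : 'rV[R]_m :=
  (1 - t) *: delta_mx 0 i + t *: delta_mx 0 j.

Lemma two_pointE (i j : 'I_m) (t : R) (l : 'I_m) :
  two_point i j t ord0 l = (1 - t) * (l == i)%:R + t * (l == j)%:R.
Proof. by rewrite !mxE. Qed.

Lemma simplex_two_point (i j : 'I_m) (t : R) : 0 <= t <= 1 ->
  simplex m (two_point i j t).
Proof.
move=> /andP[t_ge0 t_le1]; split.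
- by move=> l; rewrite two_pointE addr_ge0 // mulr_ge0 ?subr_ge0.
- under eq_bigr do rewrite two_pointE -[(_ == i)%:R]mulr1 -[(_ == j)%:R]mulr1.
  rewrite big_split /= -!mulr_sumr !(sum_indicator _ _ (fun=> 1)).
  by rewrite !mulr1 subrK.
Qed.

Lemma mean_two_point (i j : 'I_m) (t : R) :
  mean m Smin Smax (two_point i j t) =
  (1 - t) * Sgrid m Smin Smax i + t * Sgrid m Smin Smax j.
Proof.
rewrite /mean; under eq_bigr do rewrite two_pointE mulrDl -!mulrA.
by rewrite big_split /= -!mulr_sumr !sum_indicator.
Qed.

Lemma upper_mass_two_point (i k : 'I_m) (t : R) : 0 <= t <= 1 ->
  t <= upper_mass k (two_point i k t).
Proof.
move=> t01; have [p_ge0 _] := simplex_two_point i k t t01.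
rewrite /upper_mass (bigD1 k) //= -[X in X <= _]addr0 lerD ?sumr_ge0 //.
rewrite two_pointE eqxx mulr1 lerDr.
by case/andP: t01 => _ t_le1; rewrite mulr_ge0 ?subr_ge0.
Qed.

Lemma continuous_two_point (i j : 'I_m) : continuous (two_point i j).
Proof.
move=> t; apply: cvgD; (apply: cvgZ; last exact: cvg_cst).
- by apply: cvgB; [exact: cvg_cst | exact: cvg_id].
- exact: cvg_id.
Qed.

End GridDistributions.

Theorem lemma7 (R : realType) (m n : nat) (Smin Smax alpha : R)
  (hm : (2 <= m)%N) (hn : (1 <= n)%N) (hS : Smin < Smax)
  (ha0 : 0 <= alpha) (ha1 : alpha < 1) (k : 'I_m) :
  Bstar_is m n Smin Smax alpha (nseq n (Sgrid m Smin Smax k))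
    (Smin * (1 - alpha `^ (n%:R^-1)) + Sgrid m Smin Smax k * alpha `^ (n%:R^-1)).
Proof.
set a := alpha `^ n%:R^-1.
have a_ge0 : 0 <= a := powR_ge0 _ _.
have a_exp_n : a ^+ n = alpha.
  rewrite -powR_mulrn // -powRrM mulVf ?powRr1 //.
  by rewrite pnatr_eq0 -lt0n.
have a_lt1 : a < 1 by rewrite -(expr_lt1 hn a_ge0) a_exp_n.
pose i0 : 'I_m := Ordinal (ltnW hm).
have Smin_eq : Smin = Sgrid m Smin Smax i0 by rewrite /Sgrid mul0r addr0.
rewrite -a_exp_n; split.
- exists (two_point i0 k a); last first.
    by rewrite mean_two_point -Smin_eq [(1 - a) * _]mulrC [a * _]mulrC.
  apply: (closure_at_right _ _ a_lt1 (continuous_two_point i0 k a)).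
  move=> t /andP[a_lt_t t_le1].
  have t01 : 0 <= t <= 1 by rewrite t_le1 (le_trans a_ge0 (ltW a_lt_t)).
  rewrite Gset_Omega_lex_nseq //; split; first exact: simplex_two_point.
  exact: lt_le_trans a_lt_t (upper_mass_two_point i0 k t t01).
- move=> _ [p /(Fset_Omega_lex_nseq_sub hm hS n k a hn a_ge0) [p_simplex a_le_q] <-].
  exact: mean_ge_upper_mass.
Qed.
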